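(* Let $\alpha>0$, $t_0>0$, $x_0\in\mathcal H$, and let $x:[t_0,+\infty)\to\mathcal H$ be a solution of the Cauchy problem $$\tfrac{\alpha}{t}\dot x(t)+\operatorname{proj}_{C(x(t))+\ddot x(t)}(0)=0\ (t>t_0),\qquad x(t_0)=x_0,\ \dot x(t_0)=0 .$$ Then for all $i=1,\dots,m$ and all $t\in[t_0,+\infty)$ we have $f_i(x(t))\le f_i(x_0)$, i.e. $x(t)\in\{y\in\mathcal H:f_j(y)\le f_j(x_0)\ \forall j\}$ for all $t\ge t_0$.
   Context: $\mathcal H$ is a real Hilbert space. $f_1,\dots,f_m:\mathcal H\to\mathbb R$ are convex and continuously differentiable. $C(x)=\operatorname{co}\{\nabla f_i(x):i=1,\dots,m\}$. For a closed convex $K$, $\operatorname{proj}_K(y)=\arg\min_{w\in K}\|w-y\|^2$. A solution of the Cauchy problem is a function $x:[t_0,+\infty)\to\mathcal H$ such that: $x\in C^1([t_0,+\infty))$; $\dot x$ is absolutely continuous on $[t_0,T]$ for every $T\ge t_0$; there is a Bochner measurable $\ddot x$ with $\dot x(t)=\dot x(t_0)+\int_{t_0}^t\ddot x(s)\,ds$ for all $t$, and $\frac{d}{dt}\dot x=\ddot x$ a.e.; the equation holds for almost all $t\ge t_0$; and the initial conditions hold. *)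

From HB Require Import structures.
From mathcomp Require Import all_boot all_order all_algebra.
From mathcomp Require Import all_classical all_reals all_analysis.
Set Implicit Arguments.
Unset Strict Implicit.
Unset Printing Implicit Defensive.
Import Order.TTheory GRing.Theory Num.Theory.
Import numFieldNormedType.Exports.
Local Open Scope classical_set_scope.
Local Open Scope ring_scope.

Section Defs.
Context {R : realType} {H : completeNormedModType R}.

(* [inner] is an inner product on H inducing the norm of H:
   (H, inner) is then a real Hilbert space. *)
Definition is_inner_product (inner : H -> H -> R) : Prop :=
  [/\ forall u v, inner u v = inner v u,
      forall (a : R) u v w, inner (a *: u + v) w = a * inner u w + inner v w
    & forall u, inner u u = `|u| ^+ 2].

Definition is_gradient (inner : H -> H -> R) (f : H -> R) (g : H -> H) : Prop :=
  forall x, differentiable f x /\ forall h, 'd f x h = inner (g x) h.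

Definition conv_hull {m : nat} (v : 'I_m -> H) : set H :=
  [set w | exists lam : 'I_m -> R,
     [/\ forall i, 0 <= lam i, \sum_(i < m) lam i = 1
       & w = \sum_(i < m) lam i *: v i]].

Definition Cset {m : nat} (grad : 'I_m -> H -> H) (x : H) : set H :=
  conv_hull (fun i => grad i x).

Definition is_proj (K : set H) (y p : H) : Prop :=
  K p /\ forall w, K w -> `|p - y| <= `|w - y|.

(* derivative of f : R -> H at t relative to the set D (one-sided at
   endpoints of intervals) *)
Definition has_deriv_within (D : set R) (f : R -> H) (t : R) (l : H) : Prop :=
  (fun s => (s - t)^-1 *: (f s - f t)) @ within (D `\ t) (nbhs t) --> l.

Definition abs_cont_on (a b : R) (f : R -> H) : Prop :=
  forall eps : R, 0 < eps -> exists2 delta : R, 0 < delta &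
    forall (n : nat) (u v : 'I_n -> R),
      (forall k, a <= u k /\ u k <= v k /\ v k <= b) ->
      (forall k l, k != l -> v k <= u l \/ v l <= u k) ->
      \sum_(k < n) (v k - u k) < delta ->
      \sum_(k < n) `|f (v k) - f (u k)| < eps.

Definition bochner_measurable (D : set R) (g : R -> H) : Prop :=
  exists s : nat -> R -> H,
    (forall n, finite_set (range (s n))) /\
    (forall n (h : H), measurable (s n @^-1` [set h])) /\
    {ae (@lebesgue_measure R), forall t, D t -> (fun n => s n t) @ \oo --> g t}.

(* g is Bochner integrable on [a,b] and w = \int_a^b g (Bochner integral).
   For a Bochner integrable g the Bochner integral is the unique vector w
   such that <w, y> = \int_a^b <g, y> for every y. *)
Definition bochner_integral_eq (inner : H -> H -> R) (a b : R) (g : R -> H)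
    (w : H) : Prop :=
  (@lebesgue_measure R).-integrable `[a, b] (fun s => (`|g s|)%:E) /\
  forall y : H, (inner w y)%:E =
    (\int[@lebesgue_measure R]_(s in `[a, b]) (inner (g s) y)%:E)%E.

Definition is_solution (inner : H -> H -> R) {m : nat} (grad : 'I_m -> H -> H)
    (alpha t0 : R) (x0 : H) (x : R -> H) : Prop :=
  exists (xd xdd : R -> H),
      (forall t, t0 <= t -> has_deriv_within `[t0, +oo[ x t (xd t)) /\
      {within `[t0, +oo[, continuous xd} /\
      (forall T, t0 <= T -> abs_cont_on t0 T xd) /\
      bochner_measurable `[t0, +oo[ xdd /\
      (forall t, t0 <= t -> bochner_integral_eq inner t0 t xdd (xd t - xd t0)) /\
      {ae (@lebesgue_measure R), forall t, t0 < t ->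
          has_deriv_within `[t0, +oo[ xd t (xdd t)} /\
      {ae (@lebesgue_measure R), forall t, t0 < t ->
          is_proj [set c + xdd t | c in Cset grad (x t)] 0
                  (- ((alpha / t) *: xd t))} /\
      x t0 = x0 /\ xd t0 = 0.

End Defs.

(* The energy E(t) = f_i(x(t)) + |x'(t)|^2 / 2 does not increase along the
   trajectory. At almost every t > t0, the variational inequality characterising
   the projection p = -(alpha/t) x'(t) of 0 onto C(x(t)) + x''(t), tested against
   the point grad f_i(x(t)) + x''(t) of that set, gives
     E'(t) = <grad f_i(x(t)) + x''(t), x'(t)> <= -(alpha/t) |x'(t)|^2 <= 0.
   On [t0, t] the increments of E are locally bounded by K |x'(r) - x'(c)| +
   C |r - c| with x' absolutely continuous; a real induction on [t0, t], in which
   the exceptional null set is covered by an open set of small measure, turns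
   the almost-everywhere sign of E' into E(t) <= E(t0) = f_i(x0). *)

From HB Require Import structures.
From mathcomp Require Import all_boot all_order all_algebra.
From mathcomp Require Import all_classical all_reals all_analysis.
From mathcomp Require Import measurable_realfun.
From mathcomp Require Import ring lra.
Import Order.TTheory GRing.Theory Num.Theory.
Import numFieldNormedType.Exports.
Local Open Scope classical_set_scope.
Local Open Scope ring_scope.

Section DerivativeWithin.
Context {R : realType}.

Definition is_deriv_within {V : normedModType R} (D : set R) (y : R -> V)
    (t : R) (v : V) :=
  forall e, 0 < e -> exists2 d, 0 < d & forall r, D r -> `|r - t| < d ->
    `|y r - y t - (r - t) *: v| <= e * `|r - t|.

Context {V W : normedModType R}.

Lemma near_withinP (A : set R) (c : R) (P : R -> Prop) :
  (\forall r \near within A (nbhs c), P r) <->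
  exists2 d : R, 0 < d & forall r, A r -> `|r - c| < d -> P r.
Proof.
split => [/nbhs_normP [d d0 hd]|[d d0 hd]].
  by exists d => // r Ar rc; apply: hd => //=; rewrite distrC.
by apply/nbhs_normP; exists d => // r /=; rewrite distrC => rc Ar; exact: hd.
Qed.

Lemma is_deriv_within_subset D D' (y : R -> V) t v :
  D' `<=` D -> is_deriv_within D y t v -> is_deriv_within D' y t v.
Proof.
by move=> DD' hy e /hy [d d0 hd]; exists d => // r /DD'; exact: hd.
Qed.

Lemma is_deriv_within_lipschitz {D} {y : R -> V} {t v} : is_deriv_within D y t v ->
  exists2 d, 0 < d & forall r, D r -> `|r - t| < d ->
    `|y r - y t| <= (`|v| + 1) * `|r - t|.
Proof.
move=> /(_ 1 ltr01) [d d0 hd]; exists d => // r Dr rt.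
have := ler_normD (y r - y t - (r - t) *: v) ((r - t) *: v).
rewrite subrK normrZ => /le_trans; apply.
by rewrite mulrDl mul1r addrC mulrC lerD2l -[leRHS]mul1r; exact: hd.
Qed.

Lemma is_deriv_withinD D (y z : R -> V) t v w :
  is_deriv_within D y t v -> is_deriv_within D z t w ->
  is_deriv_within D (y \+ z) t (v + w).
Proof.
move=> hy hz e e0.
have e2 : 0 < e / 2 by rewrite divr_gt0.
have [d1 d10 h1] := hy _ e2.
have [d2 d20 h2] := hz _ e2.
exists (Num.min d1 d2); first by rewrite lt_min d10 d20.
move=> r Dr; rewrite lt_min => /andP [r1 r2] /=.
have -> : y r + z r - (y t + z t) - (r - t) *: (v + w) =
  (y r - y t - (r - t) *: v) + (z r - z t - (r - t) *: w).
  by rewrite scalerDr !opprD (addrACA (y r)) (addrACA (y r - y t)).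
apply: (le_trans (ler_normD _ _)); rewrite [e]splitr mulrDl.
by apply: lerD; [exact: h1|exact: h2].
Qed.

Lemma is_deriv_within_continuous D (y : R -> V) :
  (forall t, D t -> exists v, is_deriv_within D y t v) -> {within D, continuous y}.
Proof.
move=> hy; apply/subspace_continuousP => t Dt; apply/cvgrPdist_le => e e0.
have [v /is_deriv_within_lipschitz [d d0 hd]] := hy t Dt.
have ev : 0 < e / (`|v| + 1) by rewrite divr_gt0 // ltr_pwDr.
apply/near_withinP; exists (Num.min d (e / (`|v| + 1))); first by rewrite lt_min d0 ev.
move=> r Dr; rewrite lt_min => /andP [rd re].
rewrite distrC (le_trans (hd r Dr rd)) // mulrC -ler_pdivlMr ?ltr_pwDr //.
exact: ltW.
Qed.

Lemma is_deriv_within_comp {f : V -> W} {D} {y : R -> V} {t v} :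
  differentiable f (y t) -> is_deriv_within D y t v ->
  is_deriv_within D (f \o y) t ('d f (y t) v).
Proof.
move=> /diff_locallyP [/linear_lipschitz [k k0 hk] /eqaddoP df] hy e e0.
have v1 : 0 < `|v| + 1 by rewrite ltr_pwDr.
have e1 : 0 < e / (2 * (`|v| + 1)) by rewrite divr_gt0 // mulr_gt0.
have e2 : 0 < e / (2 * k) by rewrite divr_gt0 // mulr_gt0.
have /nbhs_normP [d1 d10 hd1] := df _ e1.
have [d2 d20 hd2] := hy _ e2.
have [d3 d30 hd3] := is_deriv_within_lipschitz hy.
exists (Num.min d2 (Num.min d3 (d1 / (`|v| + 1)))).
  by rewrite !lt_min d20 d30 divr_gt0.
move=> r Dr; rewrite !lt_min => /andP [rd2 /andP [rd3 rd1]] /=.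
set h := y r - y t.
have hh : `|h| <= (`|v| + 1) * `|r - t| := hd3 r Dr rd3.
have /hd1 : ball_ Num.norm 0 d1 h.
  rewrite /ball_ /= sub0r normrN (le_lt_trans hh) // mulrC -ltr_pdivlMr //.
move=> hf; have {hf} : `|f (h + y t) - (f (y t) + 'd f (y t) h)| <=
  e / (2 * (`|v| + 1)) * `|h| := hf.
rewrite {1}/h subrK => hf.
have hk2 : `|h - (r - t) *: v| <= e / (2 * k) * `|r - t| := hd2 r Dr rd2.
clearbody h.
have -> : f (y r) - f (y t) - (r - t) *: 'd f (y t) v =
    (f (y r) - (f (y t) + 'd f (y t) h)) + 'd f (y t) (h - (r - t) *: v).
  by rewrite [in RHS]opprD [in RHS]addrA linearB [in RHS]addrA subrK [in RHS]linearZ.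
apply: (le_trans (ler_normD _ _)); rewrite [e]splitr mulrDl; apply: lerD.
  apply: (le_trans hf); rewrite (le_trans (ler_wpM2l (ltW e1) hh)) //.
  by rewrite invfM !mulrA divfK ?gt_eqF.
apply: (le_trans (hk _)); rewrite (le_trans (ler_wpM2l (ltW k0) hk2)) //.
by rewrite mulrA ler_wpM2r // mulrC invfM !mulrA divfK ?gt_eqF.
Qed.

End DerivativeWithin.

Lemma has_deriv_withinW {R : realType} {V : completeNormedModType R} {D : set R}
    {y : R -> V} {t v} : has_deriv_within D y t v -> is_deriv_within D y t v.
Proof.
move=> hd e e0; move/cvgrPdist_le: hd => /(_ e e0) /near_withinP [d d0 hd].
exists d => // r Dr rt.
have [->|rt0] := eqVneq r t; first by rewrite !subrr scale0r subr0 !normr0 mulr0.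
have : `|v - (r - t)^-1 *: (y r - y t)| <= e.
  by apply: hd => //; split => // /eqP; rewrite (negbTE rt0).
have rt_gt0 : 0 < `|r - t| by rewrite normr_gt0 subr_eq0.
rewrite distrC -(ler_pM2l rt_gt0) -normrZ scalerBr scalerA.
by rewrite mulfV ?subr_eq0 // scale1r mulrC.
Qed.

Section InnerProduct.
Context {R : realType} {H : completeNormedModType R} {inner : H -> H -> R}.
Hypothesis inner_prod : is_inner_product inner.

Lemma innerC u v : inner u v = inner v u.
Proof. by case: inner_prod. Qed.

Lemma inner_normE u : inner u u = `|u| ^+ 2.
Proof. by case: inner_prod. Qed.

Lemma innerDZl a u v w : inner (a *: u + v) w = a * inner u w + inner v w.
Proof. by case: inner_prod. Qed.

Lemma inner0l w : inner 0 w = 0.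
Proof.
by have := innerDZl 1 0 0 w; rewrite scale1r addr0 mul1r; lra.
Qed.

Lemma innerZl a u w : inner (a *: u) w = a * inner u w.
Proof. by rewrite -[a *: u]addr0 innerDZl inner0l addr0. Qed.

Lemma innerDl u v w : inner (u + v) w = inner u w + inner v w.
Proof. by rewrite -[u]scale1r innerDZl mul1r scale1r. Qed.

Lemma innerBl u v w : inner (u - v) w = inner u w - inner v w.
Proof. by rewrite -scaleN1r innerDl innerZl mulN1r. Qed.

Lemma inner0r w : inner w 0 = 0.
Proof. by rewrite innerC inner0l. Qed.

Lemma innerZr a u w : inner w (a *: u) = a * inner w u.
Proof. by rewrite innerC innerZl innerC. Qed.

Lemma innerDr u v w : inner w (u + v) = inner w u + inner w v.
Proof. by rewrite innerC innerDl !(innerC w). Qed.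

Lemma innerBr u v w : inner w (u - v) = inner w u - inner w v.
Proof. by rewrite innerC innerBl !(innerC w). Qed.

Lemma sqr_normD u h : `|u + h| ^+ 2 = `|u| ^+ 2 + 2 * inner u h + `|h| ^+ 2.
Proof. by rewrite -!inner_normE innerDl !innerDr (innerC h u); ring. Qed.

Lemma normr_inner_le u v : `|inner u v| <= `|u| * `|v|.
Proof.
have [->|v0] := eqVneq v 0; first by rewrite inner0r !normr0 mulr0.
have v2 : 0 < `|v| ^+ 2 by rewrite exprn_gt0 // normr_gt0.
set p := inner u v.
have : 0 <= `|u - (p / `|v| ^+ 2) *: v| ^+ 2 by rewrite exprn_ge0.
rewrite -inner_normE innerBl !innerBr !innerZl !innerZr !inner_normE.
rewrite (innerC v u) -/p => h.
have : p ^+ 2 <= (`|u| * `|v|) ^+ 2.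
  have e1 : p / `|v| ^+ 2 * p = p ^+ 2 / `|v| ^+ 2 by rewrite mulrAC expr2.
  have e2 : p / `|v| ^+ 2 * (p / `|v| ^+ 2 * `|v| ^+ 2) = p ^+ 2 / `|v| ^+ 2.
    by rewrite divfK ?gt_eqF // e1.
  rewrite exprMn -ler_pdivrMr //; move: h; rewrite e2 e1; lra.
by rewrite -real_normK ?num_real // ler_pXn2r ?nnegrE ?mulr_ge0.
Qed.

Lemma is_deriv_within_sqr_norm {D} {y : R -> H} {t w} :
  is_deriv_within D y t w ->
  is_deriv_within D (fun s => `|y s| ^+ 2 / 2) t (inner (y t) w).
Proof.
move=> hy e e0.
have y1 : 0 < `|y t| + 1 by rewrite ltr_pwDr.
have w1 : 0 < `|w| + 1 by rewrite ltr_pwDr.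
have e1 : 0 < e / (2 * (`|y t| + 1)) by rewrite divr_gt0 // mulr_gt0.
have e2 : 0 < e / (`|w| + 1) ^+ 2 by rewrite divr_gt0 // exprn_gt0.
have [d1 d10 hd1] := hy _ e1.
have [d2 d20 hd2] := is_deriv_within_lipschitz hy.
exists (Num.min d1 (Num.min d2 (e / (`|w| + 1) ^+ 2))).
  by rewrite !lt_min d10 d20 e2.
move=> r Dr; rewrite !lt_min => /andP [rd1 /andP [rd2 rde]].
have := hd1 r Dr rd1; have := hd2 r Dr rd2.
set h := y r - y t => hh hk.
have -> : y r = y t + h by rewrite /h addrC subrK.
clearbody h.
rewrite -[_ *: inner _ _]/(_ * _) sqr_normD.
have -> : (`|y t| ^+ 2 + 2 * inner (y t) h + `|h| ^+ 2) / 2 - `|y t| ^+ 2 / 2 -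
    (r - t) * inner (y t) w = inner (y t) (h - (r - t) *: w) + `|h| ^+ 2 / 2.
  by rewrite innerBr innerZr; field.
apply: (le_trans (ler_normD _ _)); rewrite [e]splitr mulrDl; apply: lerD.
  apply: (le_trans (normr_inner_le _ _)).
  rewrite (le_trans (ler_wpM2l (normr_ge0 _) hk)) // mulrA ler_wpM2r //.
  apply: le_trans (ler_wpM2r (ltW e1) (_ : `|y t| <= `|y t| + 1)) _.
    by rewrite lerDl.
  by rewrite mulrC invfM !mulrA divfK ?gt_eqF.
have : `|h| ^+ 2 <= e * `|r - t|.
  apply: le_trans (_ : ((`|w| + 1) * `|r - t|) ^+ 2 <= _).
    by rewrite ler_pXn2r ?nnegrE ?mulr_ge0 // ltW.
  rewrite exprMn expr2 mulrA ler_wpM2r // -ler_pdivlMl ?exprn_gt0 // mulrC.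
  exact: ltW.
by rewrite (@ger0_norm _ (`|h| ^+ 2 / 2)) ?divr_ge0 ?exprn_ge0 //; lra.
Qed.

Lemma is_proj0_inner_ge0 {K : set H} {p : H} (q : H) : is_proj K 0 p ->
  (forall s, 0 < s -> s <= 1 -> K (p + s *: (q - p))) -> 0 <= inner p (q - p).
Proof.
move=> [_ pmin] Kseg.
have key s : 0 < s -> s <= 1 -> 0 <= 2 * inner p (q - p) + s * `|q - p| ^+ 2.
  move=> s0 s1; have := pmin _ (Kseg s s0 s1); rewrite !subr0 => hle.
  have : `|p| ^+ 2 <= `|p + s *: (q - p)| ^+ 2 by rewrite ler_pXn2r ?nnegrE.
  rewrite sqr_normD innerZr normrZ exprMn ger0_norm ?(ltW s0) // => h.
  by rewrite -(pmulr_rge0 _ s0); nra.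
apply/ler_addgt0Pr => e e0; set Q := `|q - p| ^+ 2 in key.
have Q1 : 0 < Q + 1 by rewrite ltr_pwDr ?exprn_ge0.
pose s := Num.min 1 (e / (Q + 1)).
have s0 : 0 < s by rewrite lt_min ltr01 divr_gt0.
have sQ : s * Q <= e.
  apply: le_trans (_ : e / (Q + 1) * (Q + 1) <= e); last by rewrite divfK ?gt_eqF.
  apply: ler_pM; rewrite ?ge_min ?lexx ?orbT ?exprn_ge0 ?(ltW s0) ?lerDl //.
have := key s s0; rewrite ge_min lexx => /(_ isT).
lra.
Qed.

Lemma conv_hull_segment m (v : 'I_m -> H) w i s :
  conv_hull v w -> 0 <= s -> s <= 1 -> conv_hull v (w + s *: (v i - w)).
Proof.
move=> [lam [lam0 lam1 wE]] s0 s1.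
pose mu j := (1 - s) * lam j + (if j == i then s else 0).
have sum_delta (F : 'I_m -> H) :
    \sum_(j < m) (if j == i then s else 0) *: F j = s *: F i.
  rewrite (bigD1 i) //= eqxx big1 ?addr0 // => j /negbTE ->.
  by rewrite scale0r.
exists mu; split.
- by move=> j; rewrite addr_ge0 ?mulr_ge0 ?subr_ge0 //; case: ifP.
- rewrite /mu big_split /= -mulr_sumr lam1 mulr1 (bigD1 i) //= eqxx.
  by rewrite big1 ?addr0 ?subrK // => j /negbTE ->.
- under eq_bigr do rewrite scalerDl -scalerA.
  rewrite big_split /= sum_delta -scaler_sumr -wE.
  by rewrite scalerBl scale1r scalerBr addrAC addrA.
Qed.

Lemma Cset_shift_segment {m} {grad : 'I_m -> H -> H} {y z p : H} i {s : R} :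
  [set c + z | c in Cset grad y] p -> 0 <= s -> s <= 1 ->
  [set c + z | c in Cset grad y] (p + s *: (grad i y + z - p)).
Proof.
move=> [c hc <-] s0 s1; exists (c + s *: (grad i y - c)).
  exact: conv_hull_segment.
by rewrite addrAC [c + z]addrC addrKA.
Qed.

Lemma proj_velocity_inner_le0 {m} {grad : 'I_m -> H -> H} {y v w : H} {a : R} i :
  0 < a -> is_proj [set c + w | c in Cset grad y] 0 (- (a *: v)) ->
  inner (grad i y) v + inner v w <= 0.
Proof.
move=> a0 hp.
have := is_proj0_inner_ge0 (grad i y + w) hp
  (fun s s0 s1 => Cset_shift_segment i hp.1 (ltW s0) s1).
rewrite opprK -scaleNr innerZl !innerDr innerZr inner_normE (innerC (grad i y)).
by have := exprn_ge0 2 (normr_ge0 v); nra.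
Qed.

End InnerProduct.

Section Monotonicity.
Context {R : realType}.

Lemma nonpos_deriv_increment {D : set R} {E : R -> R} {c L e : R} :
  is_deriv_within D E c L -> L <= 0 -> 0 < e ->
  exists2 d, 0 < d & forall s r, D s -> D r -> s <= r -> s = c \/ r = c ->
    r - s < d -> E r - E s <= e * (r - s).
Proof.
move=> hE L0 /hE [d d0 hd]; exists d => // s r Ds Dr sr [sc|rc] rs; subst.
- have := hd r Dr; rewrite ger0_norm ?subr_ge0 // => /(_ rs).
  rewrite -[_ *: L]/(_ * L) ler_norml => /andP [_].
  have : (r - c) * L <= 0 by rewrite mulr_ge0_le0 ?subr_ge0.
  lra.
- have := hd s Ds; rewrite ler0_norm ?subr_le0 // opprB => /(_ rs).
  rewrite -[_ *: L]/(_ * L) ler_norml => /andP [h _].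
  have : 0 <= (s - c) * L by rewrite mulr_le0 ?subr_le0.
  lra.
Qed.

Lemma real_induction (a b : R) (P : R -> Prop) : a <= b -> P a ->
  (forall c, a <= c -> c <= b -> exists2 eta, 0 < eta & forall s r,
     a <= s -> s <= r -> r <= b -> s = c \/ r = c -> r - s < eta -> P s -> P r) ->
  P b.
Proof.
move=> ab Pa step.
pose A := [set s | a <= s <= b /\ forall r, a <= r -> r <= s -> P r].
have Aa : A a.
  split=> [|r ar ra]; first by rewrite lexx ab.
  by have -> : r = a by apply/eqP; rewrite eq_le ra ar.
have supA : has_sup A by split; [exists a | exists b => s [/andP [_ ->]]].
set c := sup A.
have ac : a <= c := sup_upper_bound supA Aa.
have cb : c <= b by apply: ge_sup; [exists a | move=> s [/andP [_ ->]]].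
have [eta eta0 stepc] := step c ac cb.
have below r : a <= r -> r < c -> P r.
  move=> ar rc; have rc0 : 0 < c - r by rewrite subr_gt0.
  have [s [_ Ps] rs] := sup_adherent rc0 supA.
  by apply: Ps => //; rewrite -/c in rs; lra.
have Pc : P c.
  have [s As cs] := sup_adherent eta0 supA; rewrite -/c in cs.
  have sc : s <= c := sup_upper_bound supA As.
  case: As => [/andP [as_ _] Ps]; apply: (stepc s c) => //; [by right|lra|].
  exact: Ps.
have Ac r : a <= r -> r <= c -> P r.
  by move=> ar; rewrite le_eqVlt => /orP [/eqP ->|]; [exact: Pc|exact: below].
suff cbE : c = b by rewrite -cbE; exact: Pc.
apply/eqP; rewrite eq_le cb leNgt; apply/negP => cltb.
have [m1 m2] : Num.min eta (b - c) <= eta /\ Num.min eta (b - c) <= b - c.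
  by rewrite !ge_min !lexx orbT.
have m0 : 0 < Num.min eta (b - c) by rewrite lt_min eta0 subr_gt0.
have : A (c + Num.min eta (b - c) / 2).
  split=> [|r ar rm]; first by apply/andP; split; lra.
  have [rc|cr] := lerP r c; first exact: Ac.
  by apply: (stepc c r ac (ltW cr) _ (or_introl erefl) _ Pc); lra.
by move/(sup_upper_bound supA); rewrite -/c; lra.
Qed.

Definition nonoverlapping (n : nat) (u v : nat -> R) :=
  forall k l, (k < n)%N -> (l < n)%N -> k != l -> v k <= u l \/ v l <= u k.

Lemma sum_lengths_le_measure (U : set R) n (u v : nat -> R) : measurable U ->
  (forall k, (k < n)%N -> u k <= v k) -> nonoverlapping n u v ->
  (forall k r, (k < n)%N -> u k <= r -> r <= v k -> U r) ->
  ((\sum_(k < n) (v k - u k))%:E <= lebesgue_measure U)%E.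
Proof.
move=> mU uv nov vU.
pose F k : set R := if (k < n)%N then `]u k, v k]%classic else set0.
have mF k : measurable (F k) by rewrite /F; case: ifP.
have tF : trivIset setT F.
  move=> k l _ _ [z []]; rewrite /F.
  case: ifP => kn; case: ifP => ln //; rewrite /= !in_itv /= => /andP [? ?] /andP [? ?].
  by case: (eqVneq k l) => // /(nov k l kn ln) [] ?; exfalso; lra.
have -> : (\sum_(k < n) (v k - u k))%:E = \sum_(k < n) lebesgue_measure (F k).
  rewrite -sumEFin; apply: eq_bigr => k _.
  rewrite /F ltn_ord lebesgue_measure_itv /= lte_fin.
  have := uv k (ltn_ord k); rewrite le_eqVlt => /orP [/eqP ->|->].
    by rewrite ltxx subrr.
  by rewrite EFinB.
rewrite -measure_bigsetU //; apply: le_measure; rewrite ?inE //.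
  by apply: bigsetU_measurable => k _; exact: mF.
move=> z; rewrite -bigcup_mkord => -[k /= kn].
rewrite /F kn /= in_itv /= => /andP [? ?].
by apply: (vU k) => //; lra.
Qed.

Lemma negligible_open_cover {N : set R} {eps : R} :
  lebesgue_measure.-negligible N -> 0 < eps ->
  exists U, [/\ open U, N `<=` U & (lebesgue_measure U < eps%:E)%E].
Proof.
move=> [M [mM M0 NM]] eps0.
have Mfin : (lebesgue_measure M < +oo)%E by rewrite M0 ltey.
have [U [oU MU UM]] := lebesgue_regularity_outer mM Mfin eps0.
have mU : measurable U := open_measurable oU.
exists U; split => //; first exact: subset_trans MU.
apply: le_lt_trans UM; rewrite -[X in (_ <= X)%E]adde0 -M0.
apply: le_trans (measureU2 _ _ _) => //; last exact: measurableD.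
apply: le_measure; rewrite ?inE //.
  by apply: measurableU => //; exact: measurableD.
by move=> z Uz; case: (pselect (M z)) => Mz; [right|left].
Qed.

End Monotonicity.

Section IncrementBound.
Context {R : realType} {V : completeNormedModType R}.
Variables (a b e K C : R) (E : R -> R) (g : R -> V) (U N : set R).

(* The intervals [u k, v k] are where E is controlled only through g; they lie
   in the small open set U covering the exceptional null set, so the absolute
   continuity of g makes their contribution small. *)
Definition increment_bound (s : R) : Prop :=
  exists n (u v : nat -> R),
   [/\ forall k, (k < n)%N -> a <= u k /\ u k <= v k /\ v k <= s,
       nonoverlapping n u v,
       forall k r, (k < n)%N -> u k <= r -> r <= v k -> U r &
       E s - E a <= e * (s - a) +
         \sum_(k < n) (K * `|g (v k) - g (u k)| + C * (v k - u k))].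

Hypothesis e_gt0 : 0 < e.

Lemma increment_bound_start : increment_bound a.
Proof.
exists 0%N, (fun=> 0), (fun=> 0); split => //.
by rewrite big_ord0 !subrr mulr0 addr0.
Qed.

Lemma increment_bound_extend_rate s r : s <= r -> E r - E s <= e * (r - s) ->
  increment_bound s -> increment_bound r.
Proof.
move=> sr hE [n [u [v [uvs nov vU hs]]]]; exists n, u, v; split => //.
  by move=> k /uvs [? [? ?]]; split => //; split => //; exact: le_trans sr.
move: hs; set S := \sum_(k < n) _ => hs.
have : e * (s - a) + e * (r - s) = e * (r - a) by ring.
lra.
Qed.

Lemma increment_bound_extend_cover s r : a <= s -> s <= r ->
  (forall z, s <= z -> z <= r -> U z) ->
  E r - E s <= K * `|g r - g s| + C * (r - s) ->
  increment_bound s -> increment_bound r.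
Proof.
move=> as_ sr sU hE [n [u [v [uvs nov vU hs]]]].
pose u' k := if k == n then s else u k; pose v' k := if k == n then r else v k.
have last_or_old k : (k < n.+1)%N -> k = n \/ (k < n)%N.
  by rewrite ltnS leq_eqVlt => /orP [/eqP|]; [left|right].
exists n.+1, u', v'; rewrite /u' /v'; split.
- move=> k /last_or_old [->|kn]; first by rewrite eqxx.
  rewrite (ltn_eqF kn); have [? [? ?]] := uvs k kn; split => //; split => //.
  exact: le_trans sr.
- move=> k l /last_or_old [->|kn] /last_or_old [->|ln]; rewrite ?eqxx //.
  + by rewrite (ltn_eqF ln) => _; right; have [? [? ?]] := uvs l ln.
  + by rewrite (ltn_eqF kn) => _; left; have [? [? ?]] := uvs k kn.
  + by rewrite (ltn_eqF kn) (ltn_eqF ln); exact: nov.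
- move=> k z /last_or_old [->|kn]; first by rewrite eqxx; exact: sU.
  by rewrite (ltn_eqF kn); exact: vU.
- rewrite big_ord_recr /= eqxx.
  under eq_bigr => k _ do rewrite (ltn_eqF (ltn_ord k)).
  move: hs; set S := \sum_(k < n) _ => hs.
  have : e * (s - a) <= e * (r - a) by rewrite ler_wpM2l ?(ltW e_gt0) // lerD2r.
  lra.
Qed.

Hypotheses (E_dom : forall c, a <= c -> c <= b -> exists2 d, 0 < d &
    forall r, a <= r -> r <= b -> `|r - c| < d ->
      `|E r - E c| <= K * `|g r - g c| + C * `|r - c|)
  (E_deriv : forall c, a <= c -> c <= b -> ~ N c ->
    exists2 L, L <= 0 & is_deriv_within `[a, b] E c L)
  (U_open : open U) (NU : N `<=` U).

Lemma increment_bound_local_step c : a <= c -> c <= b -> exists2 eta, 0 < eta &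
  forall s r, a <= s -> s <= r -> r <= b -> s = c \/ r = c -> r - s < eta ->
    increment_bound s -> increment_bound r.
Proof.
move=> ac cb; have [Uc|Uc] := pselect (U c).
  have /nbhs_normP [rho rho0 cU] : nbhs c U by apply: open_nbhs_nbhs.
  have [d d0 hd] := E_dom c ac cb.
  exists (Num.min rho d); first by rewrite lt_min rho0 d0.
  move=> s r as_ sr rb src; rewrite lt_min => /andP [rs_rho rs_d].
  apply: increment_bound_extend_cover => //.
    move=> z sz zr; apply: cU; rewrite /ball_ /= ltr_norml.
    by apply/andP; split; case: src => <-; lra.
  case: src => [sc|rc]; subst.
    have := hd r (le_trans ac sr) rb; rewrite ger0_norm ?subr_ge0 // => /(_ rs_d).
    exact: le_trans (ler_norm _).
  have := hd s as_ (le_trans sr rb); rewrite ler0_norm ?subr_le0 // opprB => /(_ rs_d).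
  by rewrite distrC (distrC (g s)); exact: le_trans (ler_norm _).
have [L L0 hL] := E_deriv c ac cb (fun Nc => Uc (NU c Nc)).
have [d d0 hd] := nonpos_deriv_increment hL L0 e_gt0.
exists d => // s r as_ sr rb src rs; apply: increment_bound_extend_rate => //.
by apply: hd; rewrite // /= in_itv /=; apply/andP; split; lra.
Qed.

End IncrementBound.

Arguments increment_bound_local_step {R V a b e K C E g U N}.

Lemma abs_cont_ae_nonpos_deriv_le {R : realType} {V : completeNormedModType R}
    (a b K C : R) (E : R -> R) (g : R -> V) (N : set R) :
  a <= b -> 0 <= K -> 0 <= C -> abs_cont_on a b g ->
  (forall c, a <= c -> c <= b -> exists2 d, 0 < d &
    forall r, a <= r -> r <= b -> `|r - c| < d ->
      `|E r - E c| <= K * `|g r - g c| + C * `|r - c|) ->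
  lebesgue_measure.-negligible N ->
  (forall c, a < c -> c <= b -> ~ N c ->
    exists2 L, L <= 0 & is_deriv_within `[a, b] E c L) ->
  E b <= E a.
Proof.
move=> ab K0 C0 g_ac E_dom Nneg E_deriv.
have Naneg : lebesgue_measure.-negligible (N `|` [set a]).
  by apply: negligibleU Nneg _; apply/negligibleP => //; exact: lebesgue_measure_set1.
have E_deriv' c : a <= c -> c <= b -> ~ (N `|` [set a]) c ->
    exists2 L, L <= 0 & is_deriv_within `[a, b] E c L.
  move=> ac cb /not_orP [Nc ca]; apply: E_deriv => //.
  by rewrite lt_neqAle ac andbT; apply/eqP => ac'; apply: ca.
suff small e : 0 < e -> E b - E a <= e * (b - a + K + C).
  apply/ler_addgt0Pr => e e0.
  have w0 : 0 < b - a + K + C + 1 by lra.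
  have := small _ (divr_gt0 e0 w0).
  have : e / (b - a + K + C + 1) * (b - a + K + C) <= e.
    by rewrite mulrAC ler_pdivrMr // ler_wpM2l ?(ltW e0) // lerDl.
  lra.
move=> e0; have [del del0 g_del] := g_ac e e0.
have m0 : 0 < Num.min del e by rewrite lt_min del0 e0.
have [U [oU NU UM]] := negligible_open_cover Naneg m0.
have [n [u [v [uvb nov vU hE]]]] : increment_bound a e K C E g U b.
  apply: (real_induction _ _ (increment_bound a e K C E g U) ab).
    exact: increment_bound_start.
  exact: (increment_bound_local_step e0 E_dom E_deriv' oU NU).
have len : \sum_(k < n) (v k - u k) < Num.min del e.
  rewrite -lte_fin; apply: le_lt_trans UM.
  apply: sum_lengths_le_measure (open_measurable oU) _ nov vU.
  by move=> k /uvb [_ []].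
have var : \sum_(k < n) `|g (v k) - g (u k)| < e.
  apply: g_del; last by apply: lt_le_trans len _; rewrite ge_min lexx.
    by move=> k; have [? [? ?]] := uvb k (ltn_ord k).
  by move=> k l kl; exact: nov.
move: hE; rewrite big_split /= -!mulr_sumr.
have : K * \sum_(k < n) `|g (v k) - g (u k)| <= K * e by rewrite ler_wpM2l // ltW.
have : C * \sum_(k < n) (v k - u k) <= C * e.
  by rewrite ler_wpM2l // (le_trans (ltW len)) // ge_min lexx orbT.
lra.
Qed.

Section Bounds.
Context {R : realType} {V : normedModType R}.

Lemma bounded_on_segment {a b : R} {y : R -> V} : a <= b ->
  {within `[a, b], continuous y} ->
  exists2 M, 0 <= M & forall s, a <= s -> s <= b -> `|y s| <= M.
Proof.
move=> ab yc.
have ync : {within `[a, b], continuous (fun s => `|y s|)}.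
  by apply: within_continuous_comp yc => z _; exact: norm_continuous.
have [c _ hc] := EVT_max ab ync.
by exists `|y c| => // s sa sb; apply: hc; rewrite in_itv /= sa sb.
Qed.

Lemma dist_sqr_norm_le {u v : V} {M : R} : `|u| <= M -> `|v| <= M ->
  `| `|u| ^+ 2 / 2 - `|v| ^+ 2 / 2| <= M * `|u - v|.
Proof.
move=> uM vM.
have -> : `|u| ^+ 2 / 2 - `|v| ^+ 2 / 2 = (`|u| - `|v|) * ((`|u| + `|v|) / 2) by ring.
rewrite normrM (ger0_norm (_ : 0 <= (`|u| + `|v|) / 2)) ?divr_ge0 ?addr_ge0 //.
rewrite mulrC ler_pM ?divr_ge0 ?addr_ge0 //; first lra.
exact: ler_dist_dist.
Qed.

End Bounds.

Definition energy {R : realType} {H : normedModType R} (f : H -> R) (x xd : R -> H)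
  (s : R) := f (x s) + `|xd s| ^+ 2 / 2.

Section Energy.
Context {R : realType} {H : completeNormedModType R} {inner : H -> H -> R}.
Hypothesis inner_prod : is_inner_product inner.
Context {m : nat} {grad : 'I_m -> H -> H} {i : 'I_m} {f : H -> R}.
Context {x xd : R -> H} {t0 : R}.
Hypotheses (f_grad : is_gradient inner f (grad i)) (grad_cont : continuous (grad i))
  (x_deriv : forall t, t0 <= t -> is_deriv_within `[t0, +oo[ x t (xd t))
  (xd_cont : {within `[t0, +oo[, continuous xd}).

Lemma energy_dominated b : t0 <= b -> exists K C, [/\ 0 <= K, 0 <= C &
  forall c, t0 <= c -> c <= b -> exists2 d, 0 < d & forall r, t0 <= r -> r <= b ->
    `|r - c| < d -> `|energy f x xd r - energy f x xd c| <=
      K * `|xd r - xd c| + C * `|r - c|].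
Proof.
move=> t0b.
have sub : `[t0, b] `<=` `[t0, +oo[ by move=> s; rewrite /= !in_itv /= => /andP [-> _].
have x_cont : {within `[t0, +oo[, continuous x}.
  apply: is_deriv_within_continuous => s.
  by rewrite /= in_itv /= andbT => /x_deriv; exists (xd s).
have [M M0 xdM] := bounded_on_segment t0b (continuous_subspaceW sub xd_cont).
have [G G0 gG] : exists2 G, 0 <= G &
    forall s, t0 <= s -> s <= b -> `|grad i (x s)| <= G.
  apply: bounded_on_segment t0b _.
  apply: within_continuous_comp (continuous_subspaceW sub x_cont) => z _.
  exact: grad_cont.
exists M, (G * M + 1); split; rewrite ?addr_ge0 ?mulr_ge0 // => c tc cb.
have [df dG] := f_grad (x c).
have [d d0 hd] := is_deriv_within_lipschitz (is_deriv_within_comp df (x_deriv c tc)).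
exists d => // r tr rb rc; rewrite dG in hd.
have hL : `|inner (grad i (x c)) (xd c)| <= G * M.
  by rewrite (le_trans (normr_inner_le inner_prod _ _)) // ler_pM ?gG ?xdM.
have hf : `|f (x r) - f (x c)| <= (G * M + 1) * `|r - c|.
  apply: le_trans (hd r _ rc) _; first by rewrite /= in_itv /= tr.
  by rewrite ler_wpM2r // lerD2r.
have hq := dist_sqr_norm_le (xdM r tr rb) (xdM c tc cb).
rewrite /energy opprD addrACA.
by apply: le_trans (ler_normD _ _) _; rewrite [leLHS]addrC lerD.
Qed.

Lemma energy_deriv_le0 {alpha c : R} {w : H} : 0 < alpha -> 0 < c -> t0 <= c ->
  is_deriv_within `[t0, +oo[ xd c w ->
  is_proj [set p + w | p in Cset grad (x c)] 0 (- ((alpha / c) *: xd c)) ->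
  exists2 L, L <= 0 & is_deriv_within `[t0, +oo[ (energy f x xd) c L.
Proof.
move=> alpha0 c0 tc hw hp.
exists (inner (grad i (x c)) (xd c) + inner (xd c) w).
  exact: (proj_velocity_inner_le0 inner_prod i (divr_gt0 alpha0 c0) hp).
have [df dG] := f_grad (x c); rewrite -dG.
exact: is_deriv_withinD (is_deriv_within_comp df (x_deriv c tc))
  (is_deriv_within_sqr_norm inner_prod hw).
Qed.

End Energy.

Theorem corollary4p2 (R : realType) (H : completeNormedModType R)
  (inner : H -> H -> R) (m : nat) (f : 'I_m -> H -> R) (grad : 'I_m -> H -> H)
  (alpha t0 : R) (x0 : H) (x : R -> H) :
  is_inner_product inner ->
  (0 < m)%N ->
  (forall i, convex_function setT (f i : convex_lmodType H -> R^o)) ->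
  (forall i, is_gradient inner (f i) (grad i)) ->
  (forall i, continuous (grad i)) ->
  0 < alpha -> 0 < t0 ->
  is_solution inner grad alpha t0 x0 x ->
  forall (i : 'I_m) (t : R), t0 <= t -> f i (x t) <= f i x0.
Proof.
move=> inner_prod _ _ grad_f grad_cont alpha0 t00 [xd [xdd [x_deriv [xd_cont
  [xd_ac [_ [_ [xdd_deriv [proj_eq [x_t0 xd_t0]]]]]]]]]] i t t0t.
have x_deriv' s : t0 <= s -> is_deriv_within `[t0, +oo[ x s (xd s).
  by move/x_deriv; exact: has_deriv_withinW.
have [K [C [K0 C0 dom]]] :=
  energy_dominated inner_prod (grad_f i) (grad_cont i) x_deriv' xd_cont t t0t.
have : energy (f i) x xd t <= energy (f i) x xd t0.
  apply: abs_cont_ae_nonpos_deriv_le t0t K0 C0 (xd_ac t t0t) dom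
    (negligibleU xdd_deriv proj_eq) _.
  move=> c tc ct /not_orP [/contrapT xdd_c /contrapT proj_c].
  have [L L0 hL] := energy_deriv_le0 inner_prod (grad_f i) x_deriv' alpha0
    (lt_trans t00 tc) (ltW tc) (has_deriv_withinW (xdd_c tc)) (proj_c tc).
  exists L => //; apply: is_deriv_within_subset hL.
  by move=> s; rewrite /= !in_itv /= => /andP [-> _].
rewrite /energy x_t0 xd_t0 normr0 expr0n mul0r addr0.
by have := exprn_ge0 2 (normr_ge0 (xd t)); lra.
Qed.
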